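(* Let $G$ be a graph with $m$ vertices. Then the modular sumset number of $G$ is $\sigma(G)=1+\lfloor \log_2 m\rfloor$.
   Context: Graphs are simple and finite, without isolated vertices. For a positive integer $n$, $\mathbb{Z}_n$ denotes the set of non-negative integers modulo $n$ and $\mathscr{P}(\mathbb{Z}_n)$ its power set; for $A,B\subseteq\mathbb{Z}_n$, $A+B=\{x\in\mathbb{Z}_n: x\equiv a+b \pmod n,\ a\in A,\ b\in B\}$. A modular sumset labeling of $G$ is an injective function $f:V(G)\to\mathscr{P}(\mathbb{Z}_n)$ assigning non-empty subsets of $\mathbb{Z}_n$ to the vertices, with induced edge function $f^+(uv)=f(u)+f(v)$. The modular sumset number $\sigma(G)$ is the smallest positive integer $n$ such that $G$ admits a modular sumset labeling $f:V(G)\to\mathscr{P}(\mathbb{Z}_n)$. *)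

From mathcomp Require Import all_boot.
Set Implicit Arguments. Unset Strict Implicit. Unset Printing Implicit Defensive.

Definition simple_graph (T : finType) (e : rel T) : Prop :=
  symmetric e /\ irreflexive e.

Definition no_isolated_vertices (T : finType) (e : rel T) : Prop :=
  forall x : T, exists y : T, e x y.

(* Z_n is represented by 'I_n (the residues 0..n-1); subsets by {set 'I_n}. *)
Definition modsumset (n : nat) (A B : {set 'I_n}) : {set 'I_n} :=
  [set x : 'I_n | [exists a in A, exists b in B, (x : nat) == (a + b) %% n]].

Definition induced_edge_fun (T : finType) (n : nat) (f : T -> {set 'I_n})
  (u v : T) : {set 'I_n} := modsumset (f u) (f v).

Definition modular_sumset_labeling (T : finType) (e : rel T) (n : nat)
  (f : T -> {set 'I_n}) : Prop :=
  injective f /\ (forall x : T, f x != set0).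

Definition admits_modular_sumset_labeling (T : finType) (e : rel T) (n : nat)
  : Prop := exists f : T -> {set 'I_n}, modular_sumset_labeling e f.

Definition is_modular_sumset_number (T : finType) (e : rel T) (s : nat) : Prop :=
  0 < s /\ admits_modular_sumset_labeling e s /\
  (forall n : nat, 0 < n -> admits_modular_sumset_labeling e n -> s <= n).

(* A modular sumset labeling is just an injection of the vertices into the
   2^n - 1 non-empty subsets of Z_n, so G admits one exactly when
   m < 2^n; the least such n is trunc_log 2 m + 1. *)

From mathcomp Require Import all_boot.

Set Implicit Arguments.
Unset Strict Implicit.
Unset Printing Implicit Defensive.

Lemma card_setC_set0 (U : finType) : #|[set~ (set0 : {set U})]| = (2 ^ #|U|).-1.
Proof. by rewrite cardsC1 -cardsT -powersetT card_powerset cardsT. Qed.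

Lemma injective_into_card (T U : finType) (S : {set U}) (f : T -> U) :
  injective f -> (forall x, f x \in S) -> #|T| <= #|S|.
Proof.
move=> f_inj fS; rewrite -(card_imset (mem T) f_inj).
by apply: subset_leq_card; apply/subsetP => _ /imsetP [x _ ->].
Qed.

Lemma exists_injective_into (T U : finType) (S : {set U}) (u0 : U) :
  #|T| <= #|S| -> exists2 f : T -> U, injective f & forall x, f x \in S.
Proof.
rewrite cardE => leTS.
have lt_rank (x : T) : enum_rank x < size (enum S).
  exact: leq_trans (ltn_ord _) leTS.
exists (fun x => nth u0 (enum S) (enum_rank x)) => [x y /eqP | x].
- by rewrite nth_uniq ?enum_uniq // => /eqP/val_inj/enum_rank_inj.
- by rewrite -mem_enum mem_nth.
Qed.

Lemma admits_modular_sumset_labelingP (T : finType) (e : rel T) (n : nat) :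
  admits_modular_sumset_labeling e n <-> #|T| < 2 ^ n.
Proof.
have card_labels : #|[set~ (set0 : {set 'I_n})]| = (2 ^ n).-1.
  by rewrite card_setC_set0 card_ord.
rewrite -(prednK (expn_gt0 2 n)) ltnS -card_labels; split.
- move=> [f [f_inj f_neq0]]; apply: (injective_into_card f_inj) => x.
  by rewrite in_setC1 f_neq0.
- case/(exists_injective_into set0) => f f_inj f_labels.
  by exists f; split=> // x; have := f_labels x; rewrite in_setC1.
Qed.

Lemma ltn_expn_trunc_log (p m n : nat) :
  1 < p -> 0 < n -> (m < p ^ n) = (trunc_log p m < n).
Proof.
move=> p_gt1 n_gt0; apply/idP/idP => [lt_m_pn | lt_log_n].
- rewrite ltnNge; apply: contraL lt_m_pn => le_n_log; rewrite -leqNgt.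
  have : 0 < trunc_log p m := leq_trans n_gt0 le_n_log.
  rewrite trunc_log_gt0 => /andP [_ /(leq_ltn_trans (leq0n _)) m_gt0].
  exact: leq_trans (leq_pexp2l (ltnW p_gt1) le_n_log) (trunc_logP p_gt1 m_gt0).
- exact: leq_trans (trunc_log_ltn m p_gt1) (leq_pexp2l (ltnW p_gt1) lt_log_n).
Qed.

Theorem mainTheorem2 (T : finType) (e : rel T) :
  simple_graph e -> no_isolated_vertices e ->
  is_modular_sumset_number e (1 + trunc_log 2 #|T|).
Proof.
move=> _ _; rewrite add1n; split=> //; split=> [|n n_gt0].
- by apply/admits_modular_sumset_labelingP; rewrite ltn_expn_trunc_log.
- by move/admits_modular_sumset_labelingP; rewrite ltn_expn_trunc_log.
Qed.
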